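(* Let $L$ be a finite field of characteristic $p$ and cardinality $q>2$, and let $f\colon L\to L$, $f(x)=x^s$, be a power permutation of $L$ (i.e. $\gcd(s,q-1)=1$) with exponent $s\equiv 1\pmod{p-1}$. Let $\ell$ be a prime. If the degree $[L:\mathbb{F}_p]$ is a power of $\ell$ and $p\not\equiv 2\pmod \ell$, then $\mathfrak{D}(f)\equiv 0\pmod \ell$.
   Context: Let $\mu$ be the canonical additive character of $L$, $\mu(x)=\exp(2i\pi\,\mathrm{Tr}(x)/p)$, where $\mathrm{Tr}$ is the trace of $L/\mathbb{F}_p$. The Fourier coefficient of $f$ at $a\in L$ is $\widehat{f}(a)=\sum_{x\in L}\mu(ax+f(x))$; under the hypothesis $s\equiv 1\pmod{p-1}$ these are rational integers. Define $\mathfrak{D}(f)=\prod_{a\in L^{\times}}\widehat{f}(a)$. *)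

From HB Require Import structures.
From mathcomp Require Import all_boot all_order all_algebra all_field.
Set Implicit Arguments. Unset Strict Implicit. Unset Printing Implicit Defensive.
Import Order.TTheory GRing.Theory Num.Theory.
Local Open Scope ring_scope.

Definition fdeg (L : finFieldType) (p : nat) : nat := logn p #|L|.

(* absolute trace Tr_{L/F_p}(x) = x + x^p + ... + x^(p^(n-1)), an element of
   the prime subfield of L *)
Definition ftrace (L : finFieldType) (p : nat) (x : L) : L :=
  \sum_(i < fdeg L p) x ^+ (p ^ i).

Definition trnat (L : finFieldType) (p : nat) (x : L) : nat :=
  if [pick k : 'I_p | (k%:R == ftrace p x)] is Some k then nat_of_ord k else 0%N.

(* exp(2 i pi / p) in algC: p.-root (-1) has argument pi/p *)
Definition zeta_p (p : nat) : algC := (p.-root (-1)) ^+ 2.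

Definition mu (L : finFieldType) (p : nat) (x : L) : algC :=
  zeta_p p ^+ trnat p x.

Definition fourier (L : finFieldType) (p : nat) (f : L -> L) (a : L) : algC :=
  \sum_(x : L) mu p (a * x + f x).

Definition Dfrak (L : finFieldType) (p : nat) (f : L -> L) : algC :=
  \prod_(a : L | a != 0) fourier p f a.

(* Since s = 1 mod (p - 1), the map x |-> a x + x^s is homogeneous over F_p,
   so the Fourier coefficient at a is N_a(0) - N_a(1), where N_a(t) counts the x
   with Tr(a x + x^s) = t; hence D(f) is an integer.  For a = 1 the level sets
   of Tr(x + x^s) are stable under the Frobenius, which generates a group of
   order [L : F_p] = l^k, so modulo l only their points in F_p count.  There
   x + x^s = 2x has trace 2 [L : F_p] x: if this coefficient is nonzero each
   level has exactly one point, otherwise p divides [L : F_p], so p = l and the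
   levels have p and 0 points.  Either way l divides N_1(0) - N_1(1), which is a
   factor of D(f). *)

From mathcomp Require Import all_boot all_order all_algebra all_field.
From mathcomp Require Import all_fingroup all_solvable zify.
Import GRing.Theory Num.Theory.
Local Open Scope ring_scope.
Set Implicit Arguments. Unset Strict Implicit.

Definition prime_subfield (L : finFieldType) (p : nat) : {set L} :=
  [set z | z ^+ p == z].

Definition trlevel (L : finFieldType) (p : nat) (g : L -> L) (t : nat) : {set L} :=
  [set x | trnat p (g x) == t].

Lemma expr_frobenius_fixed (R : pzSemiRingType) p k (z : R) :
  z ^+ p = z -> z ^+ (p ^ k) = z.
Proof.
by move=> zp; elim: k => [|k IHk]; rewrite ?expr1 // expnSr exprM IHk zp.
Qed.

Lemma expr_prime_subfield (R : fieldType) p s (c : R) : (2 < p)%N ->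
  s = 1 %[mod p.-1] -> c ^+ p = c -> c ^+ s = c.
Proof.
move=> p_gt2 s_mod cp; have p1_gt1 : (1 < p.-1)%N by lia.
have s_mod1 : (s %% p.-1 = 1)%N by rewrite s_mod modn_small.
have [-> | c_neq0] := eqVneq c 0.
  by rewrite expr0n; case: s {s_mod} s_mod1 => //; rewrite mod0n.
have cp1 : c ^+ p.-1 = 1.
  by apply: (mulIf c_neq0); rewrite mul1r -exprSr prednK //; lia.
by rewrite (divn_eq s p.-1) s_mod1 mulnC exprD exprM cp1 expr1n mul1r.
Qed.

Section PrimeField.

Variables (L : finFieldType) (p : nat).
Hypothesis pL : p \in [pchar L].

Let p_prime : prime p := pcharf_prime pL.
Let p_gt0 : (0 < p)%N := prime_gt0 p_prime.

Lemma natr_eq_pchar (m n : nat) : (m%:R == n%:R :> L) = (m == n %[mod p])%N.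
Proof.
wlog le_nm : m n / (n <= m)%N.
  move=> W; case: (leqP n m) => [/W // | /ltnW /W nm_eq].
  by rewrite eq_sym nm_eq eq_sym.
by rewrite eqn_mod_dvd // (dvdn_pcharf pL) natrB // subr_eq0.
Qed.

Lemma natr_ord_inj : injective (fun k : 'I_p => k%:R : L).
Proof. by move=> i j /eqP; rewrite natr_eq_pchar !modn_small // => /eqP/val_inj. Qed.

Lemma frobenius_natr (m : nat) : (m%:R : L) ^+ p = m%:R.
Proof. by rewrite -(pFrobenius_autE pL) rmorph_nat. Qed.

(* [X^p - X] has at most [p] roots and the [p] elements [k%:R] are among them. *)
Lemma prime_subfieldE : prime_subfield L p = [set k%:R | k : 'I_p].
Proof.
apply/eqP; rewrite eq_sym eqEcard card_imset ?card_ord; last exact: natr_ord_inj.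
apply/andP; split.
  by apply/subsetP => _ /imsetP[k _ ->]; rewrite inE frobenius_natr.
have size_XpX : size ('X^p - 'X : {poly L}) = p.+1.
  by rewrite size_polyDl size_polyXn // size_polyN size_polyX ltnS prime_gt1.
have XpX_neq0 : ('X^p - 'X : {poly L}) != 0 by rewrite -size_poly_eq0 size_XpX.
rewrite cardE -ltnS -size_XpX max_poly_roots ?enum_uniq //.
by apply/allP => z; rewrite mem_enum inE /root !hornerE subr_eq0.
Qed.

Lemma card_prime_subfield : #|prime_subfield L p| = p.
Proof. by rewrite prime_subfieldE card_imset ?card_ord //; exact: natr_ord_inj. Qed.

Lemma prime_subfield_natr (z : L) : z ^+ p = z -> exists k : 'I_p, z = k%:R.
Proof.
move=> zp; have : z \in prime_subfield L p by rewrite inE zp.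
by rewrite prime_subfieldE => /imsetP[k _ ->]; exists k.
Qed.

Lemma expr_fdeg (x : L) : x ^+ (p ^ fdeg L p) = x.
Proof. by rewrite /fdeg -(card_pprimeChar pL) expf_card. Qed.

Lemma ftrace_frobenius (x : L) : ftrace p (x ^+ p) = ftrace p x.
Proof.
rewrite /ftrace; case: (fdeg L p) (expr_fdeg x) => [|n] x_fix; first by rewrite !big_ord0.
rewrite big_ord_recr [RHS]big_ord_recl /= -exprM -expnS x_fix expn0 expr1 addrC.
by congr (_ + _); apply: eq_bigr => i _; rewrite -exprM -expnS.
Qed.

Lemma ftrace_frobenius_fixed (x : L) : ftrace p x ^+ p = ftrace p x.
Proof.
rewrite -[RHS]ftrace_frobenius -{1}(pFrobenius_autE pL) /ftrace rmorph_sum.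
by apply: eq_bigr => i _; rewrite /= pFrobenius_autE -!exprM mulnC.
Qed.

Lemma ftrace_scale (c x : L) : c ^+ p = c -> ftrace p (c * x) = c * ftrace p x.
Proof.
move=> cp; rewrite mulr_sumr; apply: eq_bigr => i _.
by rewrite exprMn expr_frobenius_fixed.
Qed.

Lemma ftrace_prime_subfield (c : L) : c ^+ p = c -> ftrace p c = c *+ fdeg L p.
Proof.
move=> cp; rewrite /ftrace (eq_bigr (fun _ => c)) => [|i _].
  by rewrite sumr_const card_ord.
exact: expr_frobenius_fixed.
Qed.

Lemma trnat_lt (y : L) : (trnat p y < p)%N.
Proof. by rewrite /trnat; case: pickP. Qed.

Lemma trnatE (y : L) t : (t < p)%N -> (trnat p y == t) = (ftrace p y == t%:R).
Proof.
move=> lt_tp; rewrite /trnat; case: pickP => [k /eqP <- | no_k].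
  by rewrite natr_eq_pchar !modn_small.
have [k trE] := prime_subfield_natr (ftrace_frobenius_fixed y).
by have := no_k k; rewrite trE eqxx.
Qed.

Lemma trlevel_frobenius (g : L -> L) t :
  (forall x, g (x ^+ p) = g x ^+ p) ->
  forall x, (x ^+ p \in trlevel p g t) = (x \in trlevel p g t).
Proof. by move=> g_frob x; rewrite !inE g_frob /trnat ftrace_frobenius. Qed.

End PrimeField.

Lemma zeta_p_expn p : (0 < p)%N -> zeta_p p ^+ p = 1.
Proof. by move=> p_gt0; rewrite /zeta_p exprAC rootCK // sqrrN expr1n. Qed.

Lemma zeta_p_neq1 p : (1 < p)%N -> zeta_p p != 1.
Proof.
move=> p_gt1; rewrite /zeta_p -subr_eq0 subr_sqr_1 mulf_eq0 subr_eq0 addr_eq0.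
apply/norP; split; apply/eqP => r_eq.
  have /= := rootCK (ltnW p_gt1) (-1 : algC); rewrite r_eq expr1n => /eqP.
  by rewrite -subr_eq0 opprK (pnatr_eq0 _ 2).
by have := rootC_lt0 (-1 : algC) p_gt1; rewrite r_eq ltrN10.
Qed.

Lemma sum_zeta_p_expr p : (1 < p)%N -> \sum_(t < p) zeta_p p ^+ t = 0.
Proof.
move=> p_gt1; have /esym/eqP := subrX1 (zeta_p p) p.
rewrite zeta_p_expn ?subrr ?(ltnW p_gt1) // mulf_eq0 subr_eq0.
by rewrite (negbTE (zeta_p_neq1 p_gt1)) => /eqP.
Qed.

Section CharacterSums.

Variables (L : finFieldType) (p : nat).
Hypothesis pL : p \in [pchar L].

Let p_gt1 : (1 < p)%N := prime_gt1 (pcharf_prime pL).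

Lemma sum_mu_trlevel (g : L -> L) :
  \sum_x mu p (g x) = \sum_(t < p) zeta_p p ^+ t *+ #|trlevel p g t|.
Proof.
transitivity (\sum_x \sum_(t < p) if trnat p (g x) == t then zeta_p p ^+ t else 0).
  apply: eq_bigr => x _; rewrite (bigD1 (Ordinal (trnat_lt pL (g x)))) //= eqxx.
  by rewrite big1 ?addr0 // => t /negbTE; rewrite -(inj_eq val_inj) eq_sym => ->.
rewrite exchange_big; apply: eq_bigr => t _.
by rewrite -big_mkcond /= -sumr_const; apply: eq_bigl => x; rewrite inE.
Qed.

Section Homogeneous.

Variable g : L -> L.
Hypothesis g_homog : forall c x, c ^+ p = c -> g (c * x) = c * g x.

(* Multiplication by [t%:R] maps the level [1] of the trace onto the level [t]. *)
Lemma card_trlevel_homog t : (0 < t < p)%N -> #|trlevel p g t| = #|trlevel p g 1|.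
Proof.
case/andP=> t_gt0 lt_tp; have ct : (t%:R : L) ^+ p = t%:R := frobenius_natr pL t.
have c_neq0 : (t%:R : L) != 0 by rewrite -(dvdn_pcharf pL) gtnNdvd.
rewrite -(card_preimset _ (mulfI c_neq0)); apply: eq_card => x; rewrite !inE.
rewrite g_homog // !trnatE // ftrace_scale // -[X in _ == X]mulr1.
by rewrite (inj_eq (mulfI c_neq0)).
Qed.

Lemma sum_mu_homog :
  \sum_x mu p (g x) = #|trlevel p g 0|%:R - #|trlevel p g 1|%:R.
Proof.
have p_gt0 := ltnW p_gt1; pose t0 := Ordinal p_gt0.
have := sum_zeta_p_expr p_gt1; rewrite (bigD1 t0) //= expr0 => /eqP.
rewrite addrC addr_eq0 => /eqP sum_zeta_nz.
rewrite sum_mu_trlevel (bigD1 t0) //= expr0.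
rewrite (eq_bigr (fun t : 'I_p => zeta_p p ^+ t *+ #|trlevel p g 1|)) => [|t t_neq0].
  by rewrite sumrMnl sum_zeta_nz mulNrn.
by rewrite card_trlevel_homog // ltn_ord andbT lt0n; apply: t_neq0.
Qed.

End Homogeneous.

End CharacterSums.

Section FrobeniusOrbits.

Variables (L : finFieldType) (p l k : nat).
Hypotheses (pL : p \in [pchar L]) (l_prime : prime l).
Hypothesis deg_L : fdeg L p = (l ^ k)%N.

(* The Frobenius has order dividing [fdeg L p = l ^ k], so its orbits outside
   the prime subfield have size divisible by [l]. *)
Lemma card_frobenius_stable_mod (A : {set L}) :
  (forall x, (x ^+ p \in A) = (x \in A)) ->
  #|A| = #|A :&: prime_subfield L p| %[mod l].
Proof.
move=> A_stable; pose phi : {perm L} := perm (fmorph_inj (pFrobenius_aut pL)).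
have phiE x : phi x = x ^+ p by rewrite permE; exact: pFrobenius_autE.
have phi_lgroup : (l.-group <[phi]>)%g.
  apply: (@pnat_dvd _ (l ^ k)); last by rewrite pnatX pnat_id.
  rewrite order_dvdn -deg_L; apply/eqP/permP => x.
  rewrite permX perm1 -[RHS](expr_fdeg pL x).
  elim: (fdeg L p) => [|n IHn]; first by rewrite expr1.
  by rewrite iterS IHn phiE -exprM expnSr.
have phi_acts : [acts <[phi]>%g, on A | 'P].
  by rewrite cycle_subG; apply/astabsP => x; rewrite /= apermE phiE A_stable.
rewrite (pgroup_fix_mod phi_lgroup phi_acts) afix_cycle; congr (#|_| %% l)%N.
congr (_ :&: _); apply/setP => x; rewrite [in RHS]inE.
by apply/afix1P/eqP; rewrite /= apermE phiE.
Qed.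

End FrobeniusOrbits.

Section Doubling.

Variables (L : finFieldType) (p : nat) (g : L -> L).
Hypothesis pL : p \in [pchar L].
Hypothesis g_double : forall c, c ^+ p = c -> g c = c *+ 2.

Lemma trlevel_prime_subfield t : (t < p)%N ->
  trlevel p g t :&: prime_subfield L p =
  [set c in prime_subfield L p | (2 * fdeg L p)%N%:R * c == t%:R].
Proof.
move=> lt_tp; apply/setP => c; rewrite !inE andbC; apply: andb_id2l => /eqP cp.
have c2p : (c *+ 2) ^+ p = c *+ 2 by rewrite -mulr_natr exprMn frobenius_natr ?cp.
by rewrite trnatE // g_double // ftrace_prime_subfield // -mulrnA mulr_natl.
Qed.

Lemma card_prime_subfield_mul_eq (m : L) t : m ^+ p = m -> m != 0 ->
  #|[set c in prime_subfield L p | m * c == t%:R]| = 1%N.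
Proof.
move=> mp m_neq0; rewrite -(cards1 (t%:R / m)); congr #|pred_of_set _|.
apply/setP => c; rewrite !inE; apply/andP/eqP => [[_ /eqP <-] | ->]; first by rewrite mulrAC divff ?mul1r.
by rewrite exprMn exprVn frobenius_natr // mp mulrCA divff ?mulr1.
Qed.

Lemma card_trlevel_doubling_mod l k : (2 < p)%N -> prime l ->
  fdeg L p = (l ^ k)%N -> (forall x, g (x ^+ p) = g x ^+ p) ->
  #|trlevel p g 0| = #|trlevel p g 1| %[mod l].
Proof.
move=> p_gt2 l_prime deg_L g_frob; have p_prime := pcharf_prime pL.
rewrite !(card_frobenius_stable_mod pL l_prime deg_L (trlevel_frobenius pL _ g_frob)).
rewrite !trlevel_prime_subfield ?prime_gt0 ?prime_gt1 //.
set m : L := (2 * fdeg L p)%N%:R; have [m_eq0 | m_neq0] := eqVneq m 0; last first.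
  by rewrite !card_prime_subfield_mul_eq // frobenius_natr.
have p_eq_l : p = l.
  have : (p %| 2 * fdeg L p)%N by rewrite (dvdn_pcharf pL); apply/eqP.
  have p_coprime2 : coprime p 2 by rewrite prime_coprime // gtnNdvd.
  by rewrite Gauss_dvdr // deg_L Euclid_dvdX // dvdn_prime2 // => /andP[/eqP].
rewrite m_eq0.
have -> : [set c in prime_subfield L p | 0 * c == 0] = prime_subfield L p.
  by apply/setP => c; rewrite inE mul0r eqxx andbT.
have -> : [set c in prime_subfield L p | 0 * c == 1] = set0.
  by apply/setP => c; rewrite !inE mul0r [0 == _]eq_sym oner_eq0 andbF.
by rewrite card_prime_subfield // cards0 p_eq_l modnn mod0n.
Qed.

End Doubling.

Theorem mainTheorem4 (L : finFieldType) (p : nat) (s : nat) (l : nat) :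
  p \in [pchar L] ->
  (2 < #|L|)%N ->
  coprime s #|L|.-1 ->
  s = 1 %[mod p.-1] ->
  prime l ->
  (exists k : nat, fdeg L p = (l ^ k)%N) ->
  p != 2 %[mod l] ->
  exists z : int, Dfrak p (fun x : L => x ^+ s) = z%:~R /\ ((l%:Z) %| z)%Z.
Proof.
move=> pL _ _ s_mod l_prime [k deg_L] p_mod_l.
have p_gt2 : (2 < p)%N.
  rewrite ltn_neqAle prime_gt1 ?(pcharf_prime pL) // andbT.
  by apply: contra p_mod_l => /eqP <-.
have expr_s c : c ^+ p = c -> c ^+ s = c := expr_prime_subfield p_gt2 s_mod.
pose g (a x : L) := a * x + x ^+ s.
have g_homog a c x : c ^+ p = c -> g a (c * x) = c * g a x.
  by move=> cp; rewrite /g exprMn expr_s // mulrDr mulrCA.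
have g1_double c : c ^+ p = c -> g 1 c = c *+ 2 by move=> cp; rewrite /g mul1r expr_s.
have g1_frob x : g 1 (x ^+ p) = g 1 x ^+ p.
  by rewrite /g !mul1r -!(pFrobenius_autE pL) rmorphD rmorphXn.
pose F a : int := #|trlevel p (g a) 0|%:Z - #|trlevel p (g a) 1|%:Z.
exists (\prod_(a : L | a != 0) F a); split.
  rewrite /Dfrak rmorph_prod; apply: eq_bigr => a _.
  by rewrite /fourier (sum_mu_homog pL (g_homog a)) rmorphB.
rewrite (bigD1 1) ?oner_eq0 //=; apply: dvdz_mulr.
rewrite /F -eqz_mod_dvd !modz_nat eqz_nat; apply/eqP.
exact (card_trlevel_doubling_mod pL g1_double p_gt2 l_prime deg_L g1_frob).
Qed.
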